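(* There is a constant $K_1>0$ such that for any finite $B,C\subset\mathbb Z^b\times\{0,1\}$, every $M\in\mathcal M^B_C$ and every $s\geq0$, $$|\!|\!| M|\!|\!|_s\leq K_1\max_{i\in\overline C}|\!|\!| M_{\{i\}}|\!|\!|_{s+b},$$ where $M_{\{i\}}$ is the submatrix of $M$ formed by the rows indexed by $\{(i,a)\in C\}$.
   Context: $d,\nu\geq1$, $b=\nu+d$. For $n\in\mathbb Z^b$, $|n|=\max_i|n_i|$, $\langle n\rangle=\max(|n|,1)$. For finite $B,C\subset\mathbb Z^b\times\{0,1\}$, $\mathcal M^B_C$ is the space of complex matrices $(M_k^{k'})_{k\in C,k'\in B}$; $\overline B,\overline C$ are the projections on $\mathbb Z^b$; $M_i^{i'}$ is the block with rows $\{(i,a)\in C\}$ and columns $\{(i',a')\in B\}$. A norm $|\cdot|$ is fixed on complex matrices of size at most $2\times2$ with $|UW|\leq|U||W|$ and $|U|\leq|W|$ if $U$ is a submatrix of $W$. For a matrix $M$ with row set $C'$ and column set $B'$, $[M(n)]:=\max_{i-i'=n,i\in\overline{C'},i'\in\overline{B'}}|M_i^{i'}|$ if $n\in\overline{C'}-\overline{B'}$, $0$ otherwise, and $|\!|\!| M|\!|\!|_s^2:=K_0\sum_n[M(n)]^2\langle n\rangle^{2s}$ with $K_0>0$ a fixed constant. *)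

From HB Require Import structures.
From mathcomp Require Import all_boot all_order all_algebra.
From mathcomp Require Import finmap.
From mathcomp Require Import complex.
From mathcomp Require Import reals exp.

Set Implicit Arguments. Unset Strict Implicit. Unset Printing Implicit Defensive.
Import Order.TTheory GRing.Theory Num.Theory.
Local Open Scope ring_scope.

(* Points of Z^b x {0,1}: the bit {0,1} is encoded by bool (false = 0, true = 1). *)
Definition pt (b : nat) := ('rV[int]_b * bool)%type.

Definition supnorm (b : nat) (n : 'rV[int]_b) : nat := \max_(j < b) `|n ord0 j|%N.
Definition japan (R : realType) (b : nat) (n : 'rV[int]_b) : R := (maxn (supnorm n) 1)%:R.

Definition cmod (R : realType) (z : R[i]) : R := Num.sqrt (complex.Re z ^+ 2 + complex.Im z ^+ 2).

Definition small_norm (R : realType) (nrm : forall m n, 'M[R[i]]_(m, n) -> R) : Prop :=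
  [/\ (forall m n (U : 'M[R[i]]_(m, n)), (0 < m <= 2)%N -> (0 < n <= 2)%N ->
         0 <= nrm m n U /\ (nrm m n U = 0 <-> U = 0)),
      (forall m n (a : R[i]) (U : 'M[R[i]]_(m, n)), (0 < m <= 2)%N -> (0 < n <= 2)%N ->
         nrm m n (a *: U) = cmod a * nrm m n U),
      (forall m n (U W : 'M[R[i]]_(m, n)), (0 < m <= 2)%N -> (0 < n <= 2)%N ->
         nrm m n (U + W) <= nrm m n U + nrm m n W),
      (forall m n p (U : 'M[R[i]]_(m, n)) (W : 'M[R[i]]_(n, p)),
         (0 < m <= 2)%N -> (0 < n <= 2)%N -> (0 < p <= 2)%N ->
         nrm m p (U *m W) <= nrm m n U * nrm n p W) &
      (forall m n m' n' (f : 'I_m' -> 'I_m) (g : 'I_n' -> 'I_n) (W : 'M[R[i]]_(m, n)),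
         (0 < m <= 2)%N -> (0 < n <= 2)%N -> (0 < m')%N -> (0 < n')%N ->
         {mono f : x y / (x < y)%N} -> {mono g : x y / (x < y)%N} ->
         nrm m' n' (mxsub f g W) <= nrm m n W)].

Section Defs.
Local Open Scope fset_scope.
Variables (R : realType) (b : nat) (nrm : forall m n, 'M[R[i]]_(m, n) -> R) (K0 : R).

Definition proj (A : {fset pt b}) : {fset 'rV[int]_b} := [fset p.1 | p in A].

Definition bits (A : {fset pt b}) (i : 'rV[int]_b) : seq bool :=
  [seq a <- [:: false; true] | (i, a) \in A].

Definition block (B C : {fset pt b}) (M : pt b -> pt b -> R[i]) (i i' : 'rV[int]_b)
  : 'M[R[i]]_(size (bits C i), size (bits B i')) :=
  \matrix_(k, l) M (i, nth false (bits C i) k) (i', nth false (bits B i') l).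

Definition blocknorm B C M i i' : R := nrm (block B C M i i').

(* [M(n)] : max of |M_i^{i'}| over i - i' = n (0 if there is no such pair;
   the norms being nonnegative, a max seeded with 0 is the same thing). *)
Definition diffs (B C : {fset pt b}) : {fset 'rV[int]_b} :=
  [fset (ij.1 - ij.2)%R | ij in (proj C `*` proj B)].

Definition bracket (B C : {fset pt b}) (M : pt b -> pt b -> R[i]) (n : 'rV[int]_b) : R :=
  if n \in diffs B C then
    \big[Num.max/0]_(ij <- proj C `*` proj B | (ij.1 - ij.2)%R == n) blocknorm B C M ij.1 ij.2
  else 0.

Definition trinorm (B C : {fset pt b}) (M : pt b -> pt b -> R[i]) (s : R) : R :=
  Num.sqrt (K0 * (\sum_(n <- diffs B C) bracket B C M n ^+ 2 * japan R n `^ (2 * s))%R)%R.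

(* rows of C with first component i, i.e. the row set of M_{i} *)
Definition rowsat (C : {fset pt b}) (i : 'rV[int]_b) : {fset pt b} :=
  [fset p in C | p.1 == i].

End Defs.

(** Every block [M_i^{i'}] is a block of the row slice [M_{i}], so its size is
    controlled by [|||M_{i}|||_{s+b}]: [K0 |M_i^{i'}|^2 <n>^{2(s+b)} <= m^2] with
    [n = i - i'] and [m] the maximum of the slice norms.  Hence
    [[M(n)]^2 <n>^{2s} <= m^2 / K0 * <n>^{-2b}], and summing over [n] leaves
    [sum_n <n>^{-2b}], which is bounded independently of the (finite) support:
    the shell [|n| = k] has at most [(2k+1)^b <= 3^b <k>^b] points, so the sum is
    at most [3^b sum_k <k>^{-2} <= 3^(b+1)] as soon as [b >= 2]. *)

From HB Require Import structures.
From mathcomp Require Import all_boot all_order all_algebra finmap complex reals exp.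
From mathcomp Require Import zify ring lra.
Set Implicit Arguments. Unset Strict Implicit. Unset Printing Implicit Defensive.
Import Order.TTheory GRing.Theory Num.Theory.
Local Open Scope ring_scope.

Lemma absz_addn_bounded (z : int) (k : nat) : (absz z <= k)%N ->
  ((absz (z + k%:Z))%:Z = z + k%:Z) /\ (absz (z + k%:Z)%R < k.*2.+1)%N.
Proof.
move=> zk; have : `|z| <= k%:Z by rewrite -abszE lez_nat.
rewrite ler_norml => /andP[kz zk'].
have z_k_ge0 : 0 <= z + k%:Z by lia.
by split; [rewrite abszE ger0_norm | rewrite -ltz_nat abszE ger0_norm //]; lia.
Qed.

Lemma size_supnorm_le b k (F : seq 'rV[int]_b) : uniq F ->
  (forall n, n \in F -> (supnorm n <= k)%N) -> (size F <= k.*2.+1 ^ b)%N.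
Proof.
move=> uF Fk.
pose code (n : 'rV[int]_b) : {ffun 'I_b -> 'I_k.*2.+1} :=
  [ffun j => inord (absz (n ord0 j + k%:Z))].
have coord_le n j : n \in F -> (absz (n ord0 j) <= k)%N.
  move=> /Fk; apply: leq_trans; rewrite /supnorm.
  exact: (@leq_bigmax _ (fun j => absz (n ord0 j)) j).
have code_inj : {in F &, injective code}.
  move=> x y xF yF /ffunP codexy; apply/matrixP => i j.
  rewrite (ord1 i); move/(congr1 val): (codexy j); rewrite !ffunE /=.
  have [ex ltx] := absz_addn_bounded (coord_le x j xF).
  have [ey lty] := absz_addn_bounded (coord_le y j yF).
  by rewrite !inordK // => /(congr1 Posz); rewrite ex ey => /addIr.
rewrite -(size_map code) -(card_uniqP _); last by rewrite map_inj_in_uniq.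
by apply: leq_trans (max_card _) _; rewrite card_ffun !card_ord.
Qed.

(* The telescoping slack [2 / (N+1)] is what makes the induction go through. *)
Lemma sum_inv_sqr_le (R : realType) N :
  \sum_(k < N.+1) ((maxn k 1)%:R ^+ 2 : R)^-1 <= 3 - 2 / N.+1%:R.
Proof.
elim: N => [|N IH]; first by rewrite big_ord1 /= expr1n invr1; lra.
rewrite big_ord_recr /= (_ : maxn N.+1 1 = N.+1); last by lia.
set x : R := N.+1%:R in IH *.
have x_gt0 : 0 < x by rewrite ltr0n.
have -> : (N.+2%:R : R) = x + 1 by rewrite /x -natr1.
have slack : 2 / x - 2 / (x + 1) - (x ^+ 2)^-1 = (x - 1) / (x ^+ 2 * (x + 1)).
  by field; apply/andP; split; rewrite gt_eqF //; lra.
have : 0 <= (x - 1) / (x ^+ 2 * (x + 1)).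
  apply: divr_ge0; last by apply: mulr_ge0; [exact: sqr_ge0 | lra].
  by rewrite subr_ge0 /x ler1n.
by rewrite -slack; clearbody x; lra.
Qed.

Lemma shell_weight_le (R : realType) b k : (2 <= b)%N ->
  ((maxn k 1 ^ (2 * b))%:R : R)^-1 *+ (k.*2.+1 ^ b) <= 3 ^+ b * ((maxn k 1)%:R ^+ 2)^-1.
Proof.
move=> b_ge2; set m := maxn k 1.
have m_gt0 : (0 < m)%N by rewrite /m; lia.
have count_le : (k.*2.+1 ^ b * m ^ 2 <= 3 ^ b * m ^ (2 * b))%N.
  have shell : (k.*2.+1 ^ b <= (3 * m) ^ b)%N by rewrite leq_exp2r /m; lia.
  apply: leq_trans (leq_mul shell (leq_pexp2l m_gt0 b_ge2)) _.
  by rewrite expnMn -mulnA -expnD mul2n -addnn.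
rewrite -[X in X <= _]mulr_natl -!natrX.
rewrite ler_pdivlMr ?ltr0n ?expn_gt0 ?m_gt0 // mulrAC.
by rewrite ler_pdivrMr ?ltr0n ?expn_gt0 ?m_gt0 // -!natrM ler_nat.
Qed.

Lemma sum_japan_le (R : realType) b (F : seq 'rV[int]_b) : (2 <= b)%N -> uniq F ->
  \sum_(n <- F) (japan R n ^+ (2 * b))^-1 <= 3 ^+ b.+1.
Proof.
move=> b_ge2 uF; set N := (\max_(n <- F) supnorm n)%N.
have supnorm_lt n : n \in F -> (supnorm n < N.+1)%N.
  by move=> nF; rewrite ltnS; exact: leq_bigmax_seq.
rewrite (_ : \sum_(n <- F) _ = \sum_(k < N.+1) \sum_(n <- F | supnorm n == k)
    (japan R n ^+ (2 * b))^-1); last first.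
  under [RHS]eq_bigr do rewrite big_mkcond /=.
  rewrite exchange_big /= [LHS]big_seq [RHS]big_seq; apply: eq_bigr => n nF.
  by rewrite -big_mkcond /= (big_pred1 (Ordinal (supnorm_lt n nF))).
apply: le_trans (_ : _ <= \sum_(k < N.+1) 3 ^+ b * ((maxn k 1)%:R ^+ 2)^-1) _.
  apply: ler_sum => k _.
  rewrite (eq_bigr (fun _ => ((maxn k 1 ^ (2 * b))%:R : R)^-1)); last first.
    by move=> n /eqP <-; rewrite /japan natrX.
  rewrite big_const_seq iter_addr_0; apply: le_trans _ (shell_weight_le R k b_ge2).
  apply: ler_wpMn2l; first by rewrite invr_ge0 ler0n.
  rewrite -size_filter; apply: size_supnorm_le; first exact: filter_uniq.
  by move=> n; rewrite mem_filter => /andP[/eqP -> _].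
rewrite -mulr_sumr exprSr ler_pM2l ?exprn_gt0 //.
apply: le_trans (sum_inv_sqr_le R N) _.
by rewrite lerBlDr lerDl divr_ge0 ?ler0n.
Qed.

Lemma japan_gt0 (R : realType) b (n : 'rV[int]_b) : 0 < japan R n.
Proof. by rewrite /japan ltr0n; lia. Qed.

Lemma bits_rowsat b (C : {fset pt b}) i : bits (rowsat C i) i = bits C i.
Proof. by apply: eq_filter => a; rewrite !inE /= eqxx andbT. Qed.

Lemma mem_proj_rowsat b (C : {fset pt b}) i : i \in proj C -> i \in proj (rowsat C i).
Proof.
by case/imfsetP => p pC ->; apply/imfsetP; exists p; rewrite // !inE /= eqxx andbT.
Qed.

Section WeightedNorm.
Variables (R : realType) (b : nat) (nrm : forall m n, 'M[R[i]]_(m, n) -> R) (K0 : R).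
Implicit Types (B C : {fset pt b}) (M : pt b -> pt b -> R[i]).

Lemma blocknorm_rowsat B C M i i' :
  blocknorm nrm B (rowsat C i) M i i' = blocknorm nrm B C M i i'.
Proof. by rewrite /blocknorm /block bits_rowsat. Qed.

Lemma bracket_ge0 B C M n : 0 <= bracket nrm B C M n.
Proof. by rewrite /bracket; case: ifP => // _; exact: bigmax_ge_id. Qed.

Lemma blocknorm_le_bracket B C M i i' : i \in proj C -> i' \in proj B ->
  blocknorm nrm B C M i i' <= bracket nrm B C M (i - i').
Proof.
move=> iC i'B; have ii'_CB : (i, i') \in (proj C `*` proj B)%fset by rewrite in_fsetM iC.
rewrite /bracket; have -> : i - i' \in diffs B C by apply/imfsetP; exists (i, i').
exact: (le_bigmax_seq _ (i, i')).
Qed.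

Lemma bracket_sqr_le B C M n (c : R) : 0 <= c ->
  (forall i i', i \in proj C -> i' \in proj B -> i - i' = n ->
     0 <= blocknorm nrm B C M i i' -> blocknorm nrm B C M i i' ^+ 2 <= c) ->
  bracket nrm B C M n ^+ 2 <= c.
Proof.
move=> c_ge0 blocks_le; rewrite -(sqr_sqrtr c_ge0).
rewrite ler_sqr ?nnegrE ?bracket_ge0 ?sqrtr_ge0 //.
rewrite /bracket; case: ifP => _; last exact: sqrtr_ge0.
rewrite big_seq_cond; apply: bigmax_le; first exact: sqrtr_ge0.
move=> [i i'] /andP[]; rewrite in_fsetM /= => /andP[iC i'B] /eqP ii'n.
have [bn_ge0 | bn_lt0] := leP 0 (blocknorm nrm B C M i i'); last first.
  by apply: le_trans (ltW bn_lt0) _; exact: sqrtr_ge0.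
by rewrite -(ler_sqr (x := blocknorm _ _ _ _ _ _)) ?nnegrE ?sqrtr_ge0 ?sqr_sqrtr //;
  apply: blocks_le.
Qed.

Hypothesis K0_gt0 : 0 < K0.

Lemma trinorm_sqr B C M s : trinorm nrm K0 B C M s ^+ 2 =
  K0 * \sum_(n <- diffs B C) bracket nrm B C M n ^+ 2 * japan R n `^ (2 * s).
Proof.
rewrite sqr_sqrtr // mulr_ge0 ?(ltW K0_gt0) // sumr_ge0 // => n _.
by rewrite mulr_ge0 ?sqr_ge0 ?powR_ge0.
Qed.

Lemma blocknorm_weight_le_trinorm_rowsat B C M i i' s :
  i \in proj C -> i' \in proj B -> 0 <= blocknorm nrm B C M i i' ->
  K0 * (blocknorm nrm B C M i i' ^+ 2 * japan R (i - i') `^ (2 * s))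
    <= trinorm nrm K0 B (rowsat C i) M s ^+ 2.
Proof.
move=> iC i'B bn_ge0; rewrite trinorm_sqr ler_pM2l //.
have iCi := mem_proj_rowsat iC.
have ii'_diff : i - i' \in diffs B (rowsat C i).
  by apply/imfsetP; exists (i, i'); rewrite //= in_fsetM iCi.
apply: le_trans (_ : bracket nrm B (rowsat C i) M (i - i') ^+ 2 *
    japan R (i - i') `^ (2 * s) <= _); last first.
  rewrite (bigD1_seq (i - i')) ?fset_uniq //= lerDl.
  by apply: sumr_ge0 => n _; rewrite mulr_ge0 ?sqr_ge0 ?powR_ge0.
rewrite ler_wpM2r ?powR_ge0 // ler_sqr ?nnegrE ?bracket_ge0 //.
by rewrite -(blocknorm_rowsat B C M i i') blocknorm_le_bracket.
Qed.

Lemma bracket_weight_le B C M (s m : R) (t : nat) n :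
  (forall i, i \in proj C -> trinorm nrm K0 B (rowsat C i) M (s + t%:R) <= m) ->
  bracket nrm B C M n ^+ 2 * japan R n `^ (2 * s) <=
    m ^+ 2 / K0 * (japan R n ^+ (2 * t))^-1.
Proof.
move=> slices_le; have jn_gt0 := japan_gt0 R n; set j := japan R n in jn_gt0 *.
have js_gt0 : 0 < j `^ (2 * s) by exact: powR_gt0.
have jt_gt0 : 0 < j ^+ (2 * t) by exact: exprn_gt0.
have weight_split : j `^ (2 * (s + t%:R)) = j `^ (2 * s) * j ^+ (2 * t).
  by rewrite mulrDr powRD ?(gt_eqF jn_gt0) ?implybT // -natrM powR_mulrn // ltW.
have w_gt0 : 0 < K0 * j `^ (2 * (s + t%:R)) by rewrite mulr_gt0 ?powR_gt0.
have bracket_le : bracket nrm B C M n ^+ 2 <= m ^+ 2 / (K0 * j `^ (2 * (s + t%:R))).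
  apply: bracket_sqr_le; first by rewrite divr_ge0 ?sqr_ge0 ?ltW.
  move=> i i' iC i'B ii'n bn_ge0; rewrite ler_pdivlMr // mulrCA /j -ii'n.
  apply: le_trans (blocknorm_weight_le_trinorm_rowsat (s + t%:R) iC i'B bn_ge0) _.
  have slice_ge0 : 0 <= trinorm nrm K0 B (rowsat C i) M (s + t%:R) by exact: sqrtr_ge0.
  by rewrite ler_sqr ?nnegrE ?slices_le // (le_trans slice_ge0 (slices_le i iC)).
apply: le_trans (ler_wpM2r (ltW js_gt0) bracket_le) _.
by rewrite weight_split le_eqVlt; apply/orP; left; apply/eqP; field;
  rewrite !gt_eqF.
Qed.

End WeightedNorm.

Theorem lemma3p7 (R : realType) (d nu : nat) (hd : (0 < d)%N) (hnu : (0 < nu)%N)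
  (nrm : forall m n, 'M[R[i]]_(m, n) -> R) (Hnrm : small_norm nrm)
  (K0 : R) (hK0 : 0 < K0) :
  exists K1 : R, 0 < K1 /\
    forall (B C : {fset pt (nu + d)}) (M : pt (nu + d) -> pt (nu + d) -> R[i]) (s : R),
      0 <= s ->
      trinorm nrm K0 B C M s <=
      K1 * \big[Num.max/0]_(i <- proj C) trinorm nrm K0 B (rowsat C i) M (s + (nu + d)%:R).
Proof.
have b_ge2 : (2 <= nu + d)%N by lia.
have K1_ge1 : (1 : R) <= 3 ^+ (nu + d).+1 by rewrite exprn_ege1 // ler1n.
exists (3 ^+ (nu + d).+1); split=> [|B C M s _]; first exact: lt_le_trans K1_ge1.
set K1 := 3 ^+ _ in K1_ge1 *; set m := \big[Num.max/0]_(i <- proj C) _.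
have m_ge0 : 0 <= m by exact: bigmax_ge_id.
have slices_le i : i \in proj C ->
    trinorm nrm K0 B (rowsat C i) M (s + (nu + d)%:R) <= m.
  by move=> iC; exact: (le_bigmax_seq _ i).
have sum_le : \sum_(n <- diffs B C) bracket nrm B C M n ^+ 2 * japan R n `^ (2 * s)
    <= m ^+ 2 / K0 * K1.
  apply: le_trans (ler_sum _ (fun n _ => bracket_weight_le hK0 n slices_le)) _.
  rewrite -mulr_sumr ler_wpM2l ?divr_ge0 ?sqr_ge0 ?(ltW hK0) //.
  by rewrite /K1; apply: sum_japan_le b_ge2 (fset_uniq _).
have K1m_ge0 : 0 <= K1 * m by rewrite mulr_ge0 // (le_trans ler01 K1_ge1).
rewrite -ler_sqr ?nnegrE ?sqrtr_ge0 // trinorm_sqr //.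
apply: le_trans (ler_wpM2l (ltW hK0) sum_le) _.
have -> : K0 * (m ^+ 2 / K0 * K1) = m ^+ 2 * K1 by field; rewrite gt_eqF.
rewrite exprMn [X in _ <= X]mulrC.
by rewrite ler_wpM2l ?sqr_ge0 // expr2 ler_peMl // (le_trans ler01 K1_ge1).
Qed.
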